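(* In the standing setting below, suppose that $0\le\rho\le\rho_m$ in $\Omega_T$ for some constant $\rho_m>1$. Then for all $(r,t)\in\Omega_T$, $$\frac{|v(r,t)|}{r}\le\beta(\rho_m-1),\qquad |\partial_r v(r,t)|\le 2\beta(\rho_m-1).$$
   Context: Standing setting. Fix constants $L>0$, $0<R_0<L$, $\beta>0$, $T>0$. Let $R\in C^1([0,T))$ with $R(0)=R_0$ and $0<R(t)<L$, and set $\Omega_T=\{(r,t): R(t)\le r\le L,\ 0\le t<T\}$. Let $\rho\ge 0$ be a classical (continuously differentiable) function on $\Omega_T$ (the matrix density), and define the pressure $P(r,t)=P(\rho(r,t))$ where $P(\rho)=\beta(\rho-1)$ for $\rho\ge1$ and $P(\rho)=0$ for $\rho<1$. Let $v(r,t)$ be a classical function on $\Omega_T$ (twice continuously differentiable in $r$) satisfying $\frac1r\partial_r(r\,\partial_r v)-\frac{v}{r^2}=\partial_r P$ for $R(t)<r<L$, with $v(L,t)=0$, $\partial_r v(R(t),t)=P(R(t),t)$, and the free-boundary law $\dot R(t)=v(R(t),t)$. Define $Q(t)=\int_{R(t)}^L y\,P(y,t)\,dy$. *)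

From Stdlib Require Import Reals Lra.
Open Scope R_scope.

Definition Pfun (beta rho : R) : R :=
  if Rle_dec 1 rho then beta * (rho - 1) else 0.

Definition OmegaT (L T : R) (Rb : R -> R) (r t : R) : Prop :=
  0 <= t < T /\ Rb t <= r <= L.

Definition cont_on (S : R -> Prop) (f : R -> R) : Prop :=
  forall x, S x -> forall eps, eps > 0 ->
    exists d, d > 0 /\ forall y, S y -> Rabs (y - x) < d -> Rabs (f y - f x) < eps.

Definition cont2_on (S : R -> R -> Prop) (f : R -> R -> R) : Prop :=
  forall r t, S r t -> forall eps, eps > 0 ->
    exists d, d > 0 /\ forall r' t', S r' t' -> Rabs (r' - r) < d -> Rabs (t' - t) < d ->
      Rabs (f r' t' - f r t) < eps.

From Stdlib Require Import Reals Lra Psatz.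
Open Scope R_scope.

(* Fix a time t and write a = R(t).  The radial equation
   (1/r) (r v')' - v/r^2 = P' says that (1/r)(r v)' - P has zero derivative
   on (a, L); the boundary condition v'(a) = P(a) identifies this constant
   as c = v(a)/a.  Hence the flux  h(r) = r v(r) - c (r^2 + a^2)/2  satisfies
   h' = r P, h(a) = 0, and since 0 <= P <= M := beta (rho_m - 1) we get
   0 <= h(r) <= M (r^2 - a^2)/2.  At r = L, where v = 0, this forces
   -M <= c <= 0; at a general r it traps v(r)/r in [c, M/2].  Finally
   v' = P + c - v/r gives |v'| <= 2M. *)

Lemma cont_on_limit (S : R -> Prop) (f : R -> R) :
  cont_on S f <-> forall x, S x -> limit1_in f S (f x) x.
Proof.
  split.
  - intros Hf x Sx eps Heps.
    destruct (Hf x Sx eps Heps) as [d [Hd Hy]].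
    exists d; split; [exact Hd|]. intros y [Sy Hyx]. exact (Hy y Sy Hyx).
  - intros Hf x Sx eps Heps.
    destruct (Hf x Sx eps Heps) as [d [Hd Hy]].
    exists d; split; [exact Hd|]. intros y Sy Hyx. exact (Hy y (conj Sy Hyx)).
Qed.

Lemma cont_on_const (S : R -> Prop) (c : R) : cont_on S (fun _ => c).
Proof.
  apply cont_on_limit. intros x _. exact (limit_free (fun _ => c) S x x).
Qed.

Lemma cont_on_id (S : R -> Prop) : cont_on S (fun y => y).
Proof. intros x _ eps Heps. exists eps; split; auto. Qed.

Lemma cont_on_plus (S : R -> Prop) (f g : R -> R) :
  cont_on S f -> cont_on S g -> cont_on S (fun y => f y + g y).
Proof.
  rewrite !cont_on_limit. intros Hf Hg x Sx. exact (limit_plus _ _ _ _ _ _ (Hf x Sx) (Hg x Sx)).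
Qed.

Lemma cont_on_minus (S : R -> Prop) (f g : R -> R) :
  cont_on S f -> cont_on S g -> cont_on S (fun y => f y - g y).
Proof.
  rewrite !cont_on_limit. intros Hf Hg x Sx. exact (limit_minus _ _ _ _ _ _ (Hf x Sx) (Hg x Sx)).
Qed.

Lemma cont_on_mult (S : R -> Prop) (f g : R -> R) :
  cont_on S f -> cont_on S g -> cont_on S (fun y => f y * g y).
Proof.
  rewrite !cont_on_limit. intros Hf Hg x Sx. exact (limit_mul _ _ _ _ _ _ (Hf x Sx) (Hg x Sx)).
Qed.

Lemma cont_on_div (S : R -> Prop) (f g : R -> R) :
  (forall x, S x -> g x <> 0) ->
  cont_on S f -> cont_on S g -> cont_on S (fun y => f y / g y).
Proof.
  intros Hg0. rewrite !cont_on_limit. intros Hf Hg x Sx.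
  exact (limit_mul _ _ _ _ _ _ (Hf x Sx) (limit_inv _ _ _ _ (Hg x Sx) (Hg0 x Sx))).
Qed.

Lemma cont_on_subset (S S' : R -> Prop) (f : R -> R) :
  (forall x, S' x -> S x) -> cont_on S f -> cont_on S' f.
Proof.
  intros Hsub Hf x Sx eps Heps. destruct (Hf x (Hsub x Sx) eps Heps) as [d [Hd Hy]].
  exists d; split; auto.
Qed.

(* Composing with it extends a function continuous on [a, b] to a function
   continuous everywhere, which is what the Stdlib mean value theorem needs. *)
Definition clamp (a b x : R) : R := Rmax a (Rmin b x).

Lemma clamp_in (a b x : R) : a <= b -> a <= clamp a b x <= b.
Proof. intros. unfold clamp, Rmax, Rmin. repeat destruct Rle_dec; lra. Qed.

Lemma clamp_id (a b x : R) : a <= x <= b -> clamp a b x = x.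
Proof. intros. unfold clamp, Rmax, Rmin. repeat destruct Rle_dec; lra. Qed.

Lemma clamp_lipschitz (a b x y : R) : Rabs (clamp a b y - clamp a b x) <= Rabs (y - x).
Proof.
  unfold clamp, Rmax, Rmin. repeat destruct Rle_dec; unfold Rabs; repeat destruct Rcase_abs; lra.
Qed.

Lemma continuity_pt_clamped (a b : R) (f : R -> R) (x : R) :
  a <= b -> cont_on (fun y => a <= y <= b) f ->
  continuity_pt (fun y => f (clamp a b y)) x.
Proof.
  intros Hab Hf eps Heps.
  destruct (Hf (clamp a b x) (clamp_in a b x Hab) eps Heps) as [d [Hd Hy]].
  exists d; split; [exact Hd|]. intros y [_ Hyx]. simpl in *. unfold R_dist in *.
  apply Hy; [apply clamp_in; exact Hab|].
  pose proof (clamp_lipschitz a b x y). lra.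
Qed.

Lemma increment_compare (f g f' g' : R -> R) (a b : R) :
  cont_on (fun y => a <= y <= b) f -> cont_on (fun y => a <= y <= b) g ->
  (forall x, a < x < b -> derivable_pt_lim f x (f' x)) ->
  (forall x, a < x < b -> derivable_pt_lim g x (g' x)) ->
  (forall x, a < x < b -> f' x <= g' x) ->
  forall y, a <= y <= b -> f y - f a <= g y - g a.
Proof.
  intros Hf Hg Hdf Hdg Hle y Hy.
  destruct (Req_dec a y) as [<-|Hay]; [lra|].
  set (D := fun x => g (clamp a y x) - f (clamp a y x)).
  assert (HD : cont_on (fun x => a <= x <= y) (fun x => g x - f x)).
  { apply (cont_on_subset (fun x => a <= x <= b)); [intros; lra|].
    apply cont_on_minus; assumption. }
  assert (Hderiv : forall x, a < x < y -> derivable_pt_lim D x (g' x - f' x)).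
  { intros x Hx.
    apply (derivable_pt_lim_locally_ext (fun x => g x - f x) D x a y); [exact Hx| |].
    - intros z Hz. unfold D. rewrite clamp_id; lra.
    - apply derivable_pt_lim_minus; [apply Hdg | apply Hdf]; lra. }
  set (pr1 := fun c (P : a < c < y) =>
                exist (fun l => derivable_pt_lim D c l) (g' c - f' c) (Hderiv c P)).
  set (pr2 := fun c (_ : a < c < y) => derivable_pt_id c).
  destruct (MVT D id a y pr1 pr2 ltac:(lra)
              (fun c _ => continuity_pt_clamped a y _ c (proj1 Hy) HD)
              (fun c _ => derivable_continuous_pt _ _ (derivable_pt_id c)))
    as [c [Hc Hmvt]].
  unfold pr1, pr2, D, id in Hmvt. rewrite derive_pt_id in Hmvt. simpl in Hmvt.
  rewrite !clamp_id in Hmvt by lra.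
  pose proof (Hle c ltac:(lra)). nra.
Qed.

Lemma deriv_zero_const (f : R -> R) (a b : R) :
  cont_on (fun y => a <= y <= b) f ->
  (forall x, a < x < b -> derivable_pt_lim f x 0) ->
  forall y, a <= y <= b -> f y = f a.
Proof.
  intros Hf Hd y Hy.
  pose proof (cont_on_const (fun y => a <= y <= b) 0) as H0.
  pose proof (fun x (_ : a < x < b) => derivable_pt_lim_const 0 x) as Hd0.
  pose proof (increment_compare f (fun _ => 0) (fun _ => 0) (fun _ => 0) a b
                Hf H0 Hd Hd0 ltac:(intros; lra) y Hy).
  pose proof (increment_compare (fun _ => 0) f (fun _ => 0) (fun _ => 0) a b
                H0 Hf Hd0 Hd ltac:(intros; lra) y Hy).
  lra.
Qed.

Section RadialVelocity.

Variables (a b M : R) (v dv d2v p : R -> R).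
Local Notation I := (fun y => a <= y <= b).

Hypothesis Ha : 0 < a.
Hypothesis Hab : a <= b.
Hypothesis Hv_cont : cont_on I v.
Hypothesis Hdv_cont : cont_on I dv.
Hypothesis Hp_cont : cont_on I p.
Hypothesis Hv_der : forall y, a < y < b -> derivable_pt_lim v y (dv y).
Hypothesis Hdv_der : forall y, a < y < b -> derivable_pt_lim dv y (d2v y).
Hypothesis Hode : forall y, a < y < b ->
  derivable_pt_lim p y ((1 / y) * (dv y + y * d2v y) - v y / y ^ 2).
Hypothesis Hdv_a : dv a = p a.
Hypothesis Hv_b : v b = 0.
Hypothesis Hp_bnd : forall y, I y -> 0 <= p y <= M.

(* The equation says (1/r)(r v)' - p has zero derivative; evaluating at the
   free boundary, where v' = p, identifies the constant as v(a)/a. *)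
Lemma first_integral : forall y, I y -> dv y + v y / y - p y = v a / a.
Proof.
  intros y Hy.
  set (W := fun y => dv y + v y / y - p y).
  assert (HW_a : W a = v a / a) by (unfold W; rewrite Hdv_a; ring).
  rewrite <- HW_a. apply (deriv_zero_const W a b); [| |exact Hy].
  - apply cont_on_minus; [apply cont_on_plus|exact Hp_cont]; [exact Hdv_cont|].
    apply cont_on_div; [intros; lra | exact Hv_cont | apply cont_on_id].
  - intros x Hx.
    replace 0 with (d2v x + (dv x * x - 1 * v x) / x ^ 2
                    - ((1 / x) * (dv x + x * d2v x) - v x / x ^ 2)) by (field; lra).
    apply derivable_pt_lim_minus; [apply derivable_pt_lim_plus|apply Hode; exact Hx].
    + apply Hdv_der; exact Hx.
    + replace (x ^ 2) with (Rsqr x) by (unfold Rsqr; ring).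
      exact (derivable_pt_lim_div v (fun y => y) x (dv x) 1
               (Hv_der x Hx) (derivable_pt_lim_id x) ltac:(lra)).
Qed.

(* The flux r v(r) corrected by the slope c = v(a)/a: its derivative is r p(r)
   and it vanishes at r = a. *)
Let flux (y : R) : R := y * v y - v a / a / 2 * (y * y + a * a).

Lemma flux_cont : cont_on I flux.
Proof.
  unfold flux. apply cont_on_minus.
  - apply cont_on_mult; [apply cont_on_id | exact Hv_cont].
  - apply cont_on_mult; [apply cont_on_const|].
    apply cont_on_plus; [apply cont_on_mult; apply cont_on_id | apply cont_on_const].
Qed.

Lemma flux_deriv : forall y, a < y < b -> derivable_pt_lim flux y (y * p y).
Proof.
  intros y Hy. unfold flux.
  replace (y * p y) with ((1 * v y + y * dv y) - v a / a / 2 * ((1 * y + y * 1) + 0))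
    by (rewrite <- (first_integral y) by lra; field; lra).
  apply derivable_pt_lim_minus.
  - exact (derivable_pt_lim_mult (fun y => y) v y 1 (dv y)
             (derivable_pt_lim_id y) (Hv_der y Hy)).
  - apply (derivable_pt_lim_scal (fun y => y * y + a * a)).
    apply derivable_pt_lim_plus; [apply derivable_pt_lim_mult; apply derivable_pt_lim_id|].
    apply derivable_pt_lim_const.
Qed.

(* Integrating 0 <= r p(r) <= M r from a gives the two-sided flux bound. *)
Lemma flux_bounds : forall y, I y -> 0 <= flux y <= M * (y * y - a * a) / 2.
Proof.
  intros y Hy.
  assert (Hflux_a : flux a = 0) by (unfold flux; field; lra).
  split.
  - pose proof (increment_compare (fun _ => 0) flux (fun _ => 0) (fun x => x * p x) a b
                  (cont_on_const _ 0) flux_cont (fun x _ => derivable_pt_lim_const 0 x)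
                  flux_deriv) as Hcmp.
    enough (0 - 0 <= flux y - flux a) by lra.
    apply Hcmp; [|exact Hy]. intros x Hx. pose proof (Hp_bnd x ltac:(lra)). nra.
  - assert (Hsq_cont : cont_on I (fun x => M / 2 * (x * x))).
    { apply cont_on_mult; [apply cont_on_const | apply cont_on_mult; apply cont_on_id]. }
    assert (Hsq_der : forall x, a < x < b ->
              derivable_pt_lim (fun x => M / 2 * (x * x)) x (M * x)).
    { intros x _. replace (M * x) with (M / 2 * (1 * x + x * 1)) by field.
      apply derivable_pt_lim_scal. apply derivable_pt_lim_mult; apply derivable_pt_lim_id. }
    pose proof (increment_compare flux (fun x => M / 2 * (x * x)) (fun x => x * p x)
                  (fun x => M * x) a b flux_cont Hsq_cont flux_deriv Hsq_der) as Hcmp.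
    enough (flux y - flux a <= M / 2 * (y * y) - M / 2 * (a * a)) by lra.
    apply Hcmp; [|exact Hy]. intros x Hx. pose proof (Hp_bnd x ltac:(lra)). nra.
Qed.

(* At r = b the velocity vanishes, so the flux bound pins down the slope. *)
Lemma slope_bounds : - M <= v a / a <= 0.
Proof.
  pose proof (flux_bounds b ltac:(lra)) as Hb. unfold flux in Hb. rewrite Hv_b in Hb.
  assert (HM : 0 <= M) by (pose proof (Hp_bnd a ltac:(lra)); lra).
  assert (Hsum : 0 < b * b + a * a) by nra.
  split; nra.
Qed.

(* At a general r, the flux bound traps v(r)/r between the slope and M/2. *)
Lemma velocity_ratio_bounds : forall y, I y -> v a / a <= v y / y <= M / 2.
Proof.
  intros y Hy.
  pose proof (flux_bounds y Hy) as Hfy. unfold flux in Hfy.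
  pose proof slope_bounds as Hc.
  assert (Hv : v y = v y / y * y) by (field; lra).
  rewrite Hv in Hfy. set (q := v y / y) in *. set (c := v a / a) in *.
  assert (Hyy : 0 < y * y) by nra.
  assert (Hay : a * a <= y * y) by nra.
  assert (Hc_sq : 0 <= c * (a * a - y * y)) by nra.
  assert (HM_sq : 0 <= M * (a * a)) by nra.
  split; apply Rmult_le_reg_r with (y * y); nra.
Qed.

Theorem radial_velocity_bounds :
  forall y, I y -> Rabs (v y) / y <= M /\ Rabs (dv y) <= 2 * M.
Proof.
  intros y Hy.
  pose proof slope_bounds as Hc.
  pose proof (velocity_ratio_bounds y Hy) as Hq.
  pose proof (Hp_bnd y Hy) as Hp.
  assert (Hdv : dv y = p y + v a / a - v y / y) by (pose proof (first_integral y Hy); lra).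
  assert (Hratio : Rabs (v y) / y = Rabs (v y / y)).
  { unfold Rdiv. rewrite Rabs_mult, (Rabs_right (/ y)); [reflexivity|].
    apply Rle_ge, Rlt_le, Rinv_0_lt_compat; lra. }
  rewrite Hratio, Hdv. split; apply Rabs_le; lra.
Qed.

End RadialVelocity.

Lemma Pfun_lipschitz (beta x y : R) :
  0 < beta -> Rabs (Pfun beta y - Pfun beta x) <= beta * Rabs (y - x).
Proof.
  intros Hb. unfold Pfun. repeat destruct Rle_dec; unfold Rabs; repeat destruct Rcase_abs; nra.
Qed.

Lemma cont_on_Pfun (beta : R) (S : R -> Prop) (g : R -> R) :
  0 < beta -> cont_on S g -> cont_on S (fun y => Pfun beta (g y)).
Proof.
  intros Hb Hg x Sx eps Heps.
  destruct (Hg x Sx (eps / beta)) as [d [Hd Hy]]; [apply Rdiv_lt_0_compat; lra|].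
  exists d; split; [exact Hd|]. intros y Sy Hyx.
  pose proof (Hy y Sy Hyx) as Hgy. pose proof (Pfun_lipschitz beta (g x) (g y) Hb).
  apply Rmult_lt_compat_l with (r := beta) in Hgy; [|exact Hb].
  replace (beta * (eps / beta)) with eps in Hgy by (field; lra). lra.
Qed.

Lemma Pfun_bounds (beta rho_m x : R) :
  0 < beta -> 1 < rho_m -> 0 <= x <= rho_m -> 0 <= Pfun beta x <= beta * (rho_m - 1).
Proof. intros. unfold Pfun. destruct Rle_dec; nra. Qed.

Lemma cont2_on_slice (L T : R) (Rb : R -> R) (f : R -> R -> R) (t : R) :
  0 <= t < T -> cont2_on (OmegaT L T Rb) f ->
  cont_on (fun y => Rb t <= y <= L) (fun y => f y t).
Proof.
  intros Ht Hf x Hx eps Heps.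
  destruct (Hf x t (conj Ht Hx) eps Heps) as [d [Hd Hy]].
  exists d; split; [exact Hd|]. intros y Hy' Hyx. apply Hy; [split; assumption|exact Hyx|].
  rewrite Rminus_diag, Rabs_R0. exact Hd.
Qed.

Theorem lemma4p4
  (L R0 beta T : R) (Rb dRb : R -> R)
  (rho rho_r rho_t v dv d2v : R -> R -> R) (rho_m : R)
  (* constants *)
  (HL : 0 < L) (HR0 : 0 < R0 < L) (Hbeta : 0 < beta) (HT : 0 < T)
  (* R in C^1([0,T)), R(0) = R0, 0 < R(t) < L *)
  (HRder : forall t, 0 < t < T -> derivable_pt_lim Rb t (dRb t))
  (HRcont : cont_on (fun t => 0 <= t < T) Rb)
  (HdRcont : cont_on (fun t => 0 <= t < T) dRb)
  (HR0val : Rb 0 = R0)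
  (HRbnd : forall t, 0 <= t < T -> 0 < Rb t < L)
  (* rho >= 0 is C^1 on Omega_T *)
  (Hrho_nonneg : forall r t, OmegaT L T Rb r t -> 0 <= rho r t)
  (Hrho_r : forall r t, 0 < t < T -> Rb t < r < L ->
     derivable_pt_lim (fun y => rho y t) r (rho_r r t))
  (Hrho_t : forall r t, 0 < t < T -> Rb t < r < L ->
     derivable_pt_lim (fun s => rho r s) t (rho_t r t))
  (Hrho_c : cont2_on (OmegaT L T Rb) rho)
  (Hrho_rc : cont2_on (OmegaT L T Rb) rho_r)
  (Hrho_tc : cont2_on (OmegaT L T Rb) rho_t)
  (* v classical on Omega_T, C^2 in r on [R(t), L] *)
  (Hv_c : cont2_on (OmegaT L T Rb) v)
  (Hv_r : forall r t, 0 <= t < T -> Rb t < r < L ->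
     derivable_pt_lim (fun y => v y t) r (dv r t))
  (Hv_rr : forall r t, 0 <= t < T -> Rb t < r < L ->
     derivable_pt_lim (fun y => dv y t) r (d2v r t))
  (Hv_rc : forall t, 0 <= t < T ->
     cont_on (fun y => Rb t <= y <= L) (fun y => v y t) /\
     cont_on (fun y => Rb t <= y <= L) (fun y => dv y t) /\
     cont_on (fun y => Rb t <= y <= L) (fun y => d2v y t))
  (* the elliptic equation (1/r) d_r(r d_r v) - v/r^2 = d_r P for R(t) < r < L *)
  (Hode : forall r t, 0 <= t < T -> Rb t < r < L ->
     derivable_pt_lim (fun y => Pfun beta (rho y t)) r
       ((1 / r) * (dv r t + r * d2v r t) - v r t / r ^ 2))
  (* boundary conditions and free-boundary law *)
  (HvL : forall t, 0 <= t < T -> v L t = 0)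
  (HvR : forall t, 0 <= t < T -> dv (Rb t) t = Pfun beta (rho (Rb t) t))
  (Hfb : forall t, 0 <= t < T -> dRb t = v (Rb t) t)
  (* hypothesis of the lemma *)
  (Hrho_m : 1 < rho_m)
  (Hrho_bnd : forall r t, OmegaT L T Rb r t -> 0 <= rho r t <= rho_m) :
  forall r t, OmegaT L T Rb r t ->
    Rabs (v r t) / r <= beta * (rho_m - 1) /\
    Rabs (dv r t) <= 2 * beta * (rho_m - 1).
Proof.
  intros r t [Ht Hr].
  destruct (Hv_rc t Ht) as [Hv_cont [Hdv_cont _]].
  pose proof (HRbnd t Ht) as HRt.
  replace (2 * beta * (rho_m - 1)) with (2 * (beta * (rho_m - 1))) by ring.
  apply (radial_velocity_bounds (Rb t) L (beta * (rho_m - 1))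
           (fun y => v y t) (fun y => dv y t) (fun y => d2v y t)
           (fun y => Pfun beta (rho y t))).
  - exact (proj1 HRt).
  - lra.
  - exact Hv_cont.
  - exact Hdv_cont.
  - exact (cont_on_Pfun beta _ _ Hbeta (cont2_on_slice L T Rb rho t Ht Hrho_c)).
  - intros y Hy. exact (Hv_r y t Ht Hy).
  - intros y Hy. exact (Hv_rr y t Ht Hy).
  - intros y Hy. exact (Hode y t Ht Hy).
  - exact (HvR t Ht).
  - exact (HvL t Ht).
  - intros y Hy. apply Pfun_bounds; [exact Hbeta | exact Hrho_m |].
    apply Hrho_bnd. split; assumption.
  - exact Hr.
Qed.
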